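(* Let $x\in\mathcal X$. If $T(x)\ge 1-\alpha$, then $\mathcal U_x(\mu)\ge 0$ for all $\mu\ge 0$. Otherwise, $\mu\mapsto\mathcal U_x(\mu)$ is decreasing on $[0,\infty)$.
   Context: Let $(X,Y)\sim P_{XY}$ on $\mathcal X\times\mathcal Y$, $\alpha\in(0,1)$, $\mathcal I$ a finite collection of subsets of $\mathcal Y$, $w:\mathcal I\to(0,B)$ a bounded positive weight. For $C\in\mathcal I$ let $p_C(x)=\mathbb P(Y\in C\mid X=x)$, $\ell_{x,C}(\mu)=w(C)p_C(x)+\mu(p_C(x)-(1-\alpha))$ for $\mu\ge0$, $\mathcal U_x(\mu)=\max_{C\in\mathcal I}\ell_{x,C}(\mu)$, and $T(x)=\max_{C\in\mathcal I}p_C(x)$. *)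

From HB Require Import structures.
From mathcomp Require Import all_boot all_order all_algebra.
From mathcomp Require Import all_classical all_reals ereal measure probability.
Set Implicit Arguments. Unset Strict Implicit. Unset Printing Implicit Defensive.
Import Order.TTheory GRing.Theory Num.Theory.
Local Open Scope ring_scope.
Local Open Scope classical_set_scope.

(* The conditional law of Y given X = x is given by the Markov kernel K:
   p_C(x) = P(Y \in C | X = x) = K x C. *)
Definition pC (R : realType) (dX dY : measure_display)
  (X : measurableType dX) (Y : measurableType dY)
  (K : X -> probability Y R) (C : set Y) (x : X) : R := fine (K x C).

Definition ell (R : realType) (alpha wC pCx mu : R) : R :=
  wC * pCx + mu * (pCx - (1 - alpha)).

(* U_x(mu) = max_{C in I} l_{x,C}(mu), I a nonempty finite index type
   (i0 witnesses nonemptiness; the max does not depend on it). *)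
Definition Ux (R : realType) (dX dY : measure_display)
  (X : measurableType dX) (Y : measurableType dY)
  (K : X -> probability Y R) (I : finType) (i0 : I) (S : I -> set Y)
  (w : I -> R) (alpha : R) (x : X) (mu : R) : R :=
  \big[Num.max/ell alpha (w i0) (pC K (S i0) x) mu]_(i : I)
     ell alpha (w i) (pC K (S i) x) mu.

Definition Tx (R : realType) (dX dY : measure_display)
  (X : measurableType dX) (Y : measurableType dY)
  (K : X -> probability Y R) (I : finType) (i0 : I) (S : I -> set Y)
  (x : X) : R :=
  \big[Num.max/pC K (S i0) x]_(i : I) pC K (S i) x.

From HB Require Import structures.
From mathcomp Require Import all_boot all_order all_algebra.
From mathcomp Require Import all_classical all_reals ereal measure probability.
Import Order.TTheory GRing.Theory Num.Theory.
Local Open Scope ring_scope.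
Local Open Scope classical_set_scope.

(* Each ell_{x,C} is affine in mu with slope p_C(x) - (1 - alpha).  If some
   p_C(x) reaches 1 - alpha, that line is nonnegative on [0, oo) and bounds
   U_x from below; if all p_C(x) stay below 1 - alpha, every line is strictly
   decreasing, and so is their pointwise maximum. *)

Section SeededBigmax.
Context {disp : Order.disp_t} {T : orderType disp} {I : finType}.
Implicit Types (F : I -> T).

Lemma bigmax_attained (i0 : I) F : exists j, \big[Order.max/F i0]_i F i = F j.
Proof.
exists [arg max_(i > i0) F i]%O; case: arg_maxP => // j _ Fj_max.
apply/le_anti; rewrite le_bigmax andbT.
by apply/bigmax_leP; split=> [|i _]; apply: Fj_max.
Qed.

Lemma lt_bigmax2 (i0 : I) F1 F2 : (forall i, (F1 i < F2 i)%O) ->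
  (\big[Order.max/F1 i0]_i F1 i < \big[Order.max/F2 i0]_i F2 i)%O.
Proof.
move=> lt_F12; apply/bigmax_ltP; split=> [|i _];
  exact: lt_le_trans (lt_F12 _) (le_bigmax _ _ _).
Qed.

End SeededBigmax.

Lemma pC_ge0 (R : realType) (dX dY : measure_display)
  (X : measurableType dX) (Y : measurableType dY)
  (K : X -> probability Y R) (C : set Y) (x : X) : 0 <= pC K C x.
Proof. by rewrite /pC fine_ge0 // measure_ge0. Qed.

Section Ell.
Variables (R : realType) (alpha wC pCx : R).

Lemma ell_ge0 mu : 0 <= wC -> 0 <= pCx -> 1 - alpha <= pCx -> 0 <= mu ->
  0 <= ell alpha wC pCx mu.
Proof.
move=> wC_ge0 pCx_ge0 pCx_ge mu_ge0.
by rewrite addr_ge0 ?mulr_ge0 ?subr_ge0.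
Qed.

Lemma ell_decreasing : pCx < 1 - alpha ->
  {homo ell alpha wC pCx : mu1 mu2 /~ mu1 < mu2}.
Proof.
move=> pCx_lt mu1 mu2 lt_mu12.
by rewrite /ell ltrD2l ltr_nM2r // subr_lt0.
Qed.

End Ell.

Theorem lemma2 (R : realType) (dX dY : measure_display)
  (X : measurableType dX) (Y : measurableType dY)
  (K : X -> probability Y R) (alpha : R) (halpha : 0 < alpha < 1)
  (I : finType) (i0 : I) (S : I -> set Y) (hS : forall i, measurable (S i))
  (B : R) (w : I -> R) (hw : forall i, 0 < w i < B) (x : X) :
  (1 - alpha <= Tx K i0 S x ->
     forall mu : R, 0 <= mu -> 0 <= Ux K i0 S w alpha x mu) /\
  (Tx K i0 S x < 1 - alpha ->
     forall mu1 mu2 : R, 0 <= mu1 -> mu1 < mu2 ->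
       Ux K i0 S w alpha x mu2 < Ux K i0 S w alpha x mu1).
Proof.
have w_ge0 i : 0 <= w i by case/andP: (hw i) => /ltW.
rewrite /Ux; split.
- rewrite /Tx; have [j ->] := bigmax_attained i0 (fun i => pC K (S i) x).
  move=> pCj_ge mu mu_ge0; apply: (bigmax_sup j) => //.
  by apply: ell_ge0 => //; apply: pC_ge0.
- move=> T_lt mu1 mu2 _ lt_mu12; apply: lt_bigmax2 => i.
  apply: ell_decreasing lt_mu12; apply: le_lt_trans T_lt.
  exact: (le_bigmax _ (fun i => pC K (S i) x)).
Qed.
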